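(* Let $\alpha>0$, $A>0$, $k\ge2$ and $a\ge1$. Then \[ \lambda_k(I_{A^{1/2}a},\alpha)+\lambda_1(I_{A^{1/2}/a},\alpha)\ge\lambda_1(Q_{(A/k)^{1/2}},\alpha)=\lambda_k(S_k,\alpha). \]
   Context: For a bounded open set $\Omega\subset\mathbb{R}^d$ ($d=1,2$) with Lipschitz boundary (possibly disconnected) and $\alpha>0$, $\lambda_1(\Omega,\alpha)\le\lambda_2(\Omega,\alpha)\le\cdots$ denote the eigenvalues, counted with multiplicity, of the Robin Laplacian $-\Delta u=\lambda u$, $\partial_\nu u+\alpha u=0$ on $\partial\Omega$ (defined via the form $\int_\Omega\nabla u\cdot\overline{\nabla v}+\alpha\int_{\partial\Omega}u\overline v$ on $H^1(\Omega)$). $I_b$ is an interval of length $b$; $Q_s$ is a square of side length $s$; $S_k$ is the disjoint union of $k$ equal squares of total area $A$. The left-hand side is the eigenvalue of the rectangle with sides $A^{1/2}a$, $A^{1/2}/a$ associated with its $(k,1)$ mode. *)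

From Stdlib Require Import Reals.
From Coquelicot Require Import Coquelicot.
Open Scope R_scope.

Fixpoint lsum (k : nat) (g : nat -> R) : R :=
  match k with O => 0 | S n => lsum n g + g n end.

Definition lincomb {X : Type} (k : nat) (c : nat -> R) (f : nat -> X -> R)
  : X -> R := fun x => lsum k (fun i => c i * f i x).

Definition nonzero_coeffs (k : nat) (c : nat -> R) : Prop :=
  exists i, (i < k)%nat /\ c i <> 0.

(** Courant--Fischer min-max value: k-th eigenvalue (counted with
    multiplicity) of the self-adjoint operator associated with the
    quadratic form [a] relative to the L^2 mass [m], computed over a core
    [adm] of the form domain:
      lambda_k = inf_{V, dim V = k} sup_{v in V \ 0} a(v)/m(v). *)
Definition minmax {X : Type} (adm : (X -> R) -> Prop)
  (a m : (X -> R) -> R) (k : nat) : Rbar :=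
  Glb_Rbar (fun r => exists f : nat -> X -> R,
     (forall i, (i < k)%nat -> adm (f i)) /\
     (forall c, nonzero_coeffs k c -> 0 < m (lincomb k c f)) /\
     Finite r = Lub_Rbar (fun q => exists c, nonzero_coeffs k c /\
                    q = a (lincomb k c f) / m (lincomb k c f))).

(** C^1 functions on R (restrictions to [0,b] form a core of H^1(0,b)). *)
Definition C1_1d (u : R -> R) : Prop :=
  forall x, ex_derive u x /\ continuous (Derive u) x.

Definition energy_I (alpha b : R) (u : R -> R) : R :=
  RInt (fun x => (Derive u x) ^ 2) 0 b + alpha * (u 0 ^ 2 + u b ^ 2).

Definition mass_I (b : R) (u : R -> R) : R := RInt (fun x => u x ^ 2) 0 b.

Definition robin_eig_interval (alpha b : R) (k : nat) : Rbar :=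
  minmax C1_1d (energy_I alpha b) (mass_I b) k.

Definition dx (u : R * R -> R) (p : R * R) : R :=
  Derive (fun x => u (x, snd p)) (fst p).
Definition dy (u : R * R -> R) (p : R * R) : R :=
  Derive (fun y => u (fst p, y)) (snd p).

(** C^1 functions on R^2 (restrictions form a core of H^1 of a square). *)
Definition C1_2d (u : R * R -> R) : Prop :=
  forall p, ex_derive (fun x => u (x, snd p)) (fst p) /\
            ex_derive (fun y => u (fst p, y)) (snd p) /\
            continuous (dx u) p /\ continuous (dy u) p.

Definition int_sq (s : R) (g : R * R -> R) : R :=
  RInt (fun x => RInt (fun y => g (x, y)) 0 s) 0 s.

Definition energy_Q (alpha s : R) (u : R * R -> R) : R :=
  int_sq s (fun p => dx u p ^ 2 + dy u p ^ 2)
  + alpha * (RInt (fun x => u (x, 0) ^ 2 + u (x, s) ^ 2) 0 s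
             + RInt (fun y => u (0, y) ^ 2 + u (s, y) ^ 2) 0 s).

Definition mass_Q (s : R) (u : R * R -> R) : R := int_sq s (fun p => u p ^ 2).

Definition robin_eig_square (alpha s : R) (k : nat) : Rbar :=
  minmax C1_2d (energy_Q alpha s) (mass_Q s) k.

(** ---------- S_n: disjoint union of n equal squares of total area A ----
   Each square has side sqrt(A/n); a function on S_n is a family of
   functions u(j, .) on the squares j < n. *)
Definition adm_S (n : nat) (u : nat * (R * R) -> R) : Prop :=
  forall j, (j < n)%nat -> C1_2d (fun p => u (j, p)).

Definition energy_S (alpha A : R) (n : nat) (u : nat * (R * R) -> R) : R :=
  lsum n (fun j => energy_Q alpha (sqrt (A / INR n)) (fun p => u (j, p))).

Definition mass_S (A : R) (n : nat) (u : nat * (R * R) -> R) : R :=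
  lsum n (fun j => mass_Q (sqrt (A / INR n)) (fun p => u (j, p))).

Definition robin_eig_squares (alpha A : R) (n k : nat) : Rbar :=
  minmax (adm_S n) (energy_S alpha A n) (mass_S A n) k.

(* On an interval of length [b] the first Robin eigenvalue is [(alpha / t) ^ 2]
   where [t * atan t = alpha * b / 2]: with [r = alpha / t], the Riccati identity for
   [g = - r tan (r (x - c))] gives [int u'^2 + alpha (u(x0)^2 + u(x1)^2) >= r^2 int u^2].
   Any [k] trial functions on [(0, L)] have a nontrivial combination vanishing at the
   [k - 1] interior nodes of the subdivision into pieces of length [p = L / k], hence
   [lambda_k(I_L) >= lambda_1(I_p)].  The product of two one-dimensional eigenfunctions
   gives [lambda_1(Q_s) <= 2 lambda_1(I_s)].  For [p = A^(1/2) a / k], [q = A^(1/2) / a]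
   we have [p q = s^2], so [(t_p atan t_p)(t_q atan t_q) = (t_s atan t_s)^2], and
   [2 / t_s^2 <= 1 / t_p^2 + 1 / t_q^2] because [ln (t atan t)], as a function of
   [y = t^(-2)], is convex and decreasing.  Finally [lambda_k(S_k) = lambda_1(Q_s)]:
   one square function copied onto the [k] components spans a [k]-dimensional space
   with constant Rayleigh quotient, and any function on [S_k] is bounded squarewise. *)

From Stdlib Require Import Reals.
From Coquelicot Require Import Coquelicot.
From Stdlib Require Import Lra Lia FunctionalExtensionality Classical.
Open Scope R_scope.

(* Equalities between [RInt]s live in Coquelicot's normed-module carrier of
   [R]; [ring] and [field] only recognise them once retyped at [R]. *)
Ltac eq_at_R := match goal with |- @eq _ ?x ?y => change (@eq R x y) end.

Lemma RInt_not_ex (f : R -> R) (a b : R) : ~ ex_RInt f a b -> RInt f a b = 0.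
Proof.
  intros Hf. unfold RInt, iota, lim; simpl. unfold R_complete_lim.
  rewrite (Lub_Rbar_eqset _ (fun _ => True)).
  - replace (Lub_Rbar (fun _ => True)) with p_infty; [reflexivity|].
    symmetry. apply is_lub_Rbar_unique. split; [now intros x _|].
    intros [z| |] Hz; simpl; auto.
    + specialize (Hz (z + 1) I). simpl in Hz. lra.
    + exact (Hz 0 I).
  - intros x. split; auto. intros _ y Hy. exfalso. apply Hf. now exists y.
Qed.

(* Unconditional, thanks to the junk value [RInt f a b = 0] of non-integrable [f]. *)
Lemma RInt_scal_R (f : R -> R) (a b l : R) :
  RInt (fun x => l * f x) a b = l * RInt f a b.
Proof.
  destruct (classic (ex_RInt f a b)) as [Hf|Hf].
  - exact (RInt_scal f a b l Hf).
  - rewrite (RInt_not_ex f a b Hf).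
    destruct (Req_dec l 0) as [->|Hl].
    + rewrite (RInt_ext _ (fun _ => 0)), RInt_const by (intros x _; apply Rmult_0_l).
      eq_at_R. change (scal (b - a) 0) with ((b - a) * 0). ring.
    + rewrite RInt_not_ex; [eq_at_R; ring|]. intros Hlf. apply Hf.
      apply (ex_RInt_ext (fun x => scal (/ l) (l * f x))).
      * intros x _. change (scal (/ l) (l * f x)) with (/ l * (l * f x)).
        eq_at_R. now field.
      * exact (ex_RInt_scal (V := R_NormedModule) _ a b (/ l) Hlf).
Qed.

Lemma RInt_ge_0_R (f : R -> R) (a b : R) :
  a <= b -> (forall x, a < x < b -> 0 <= f x) -> 0 <= RInt f a b.
Proof.
  intros Hab Hf. destruct (classic (ex_RInt f a b)) as [H|H].
  - now apply RInt_ge_0.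
  - rewrite RInt_not_ex; auto; lra.
Qed.

Lemma ex_RInt_continuity_pt (f : R -> R) (a b : R) :
  a <= b -> (forall x, a <= x <= b -> continuity_pt f x) -> ex_RInt f a b.
Proof.
  intros Hab Hf. apply (ex_RInt_continuous (V := R_CompleteNormedModule)). intros x Hx.
  rewrite Rmin_left, Rmax_right in Hx by exact Hab.
  apply continuity_pt_filterlim. now apply Hf.
Qed.

Lemma RInt_lin2 (f g : R -> R) (a b k l : R) :
  ex_RInt f a b -> ex_RInt g a b ->
  RInt (fun x => k * f x + l * g x) a b = k * RInt f a b + l * RInt g a b.
Proof.
  intros Hf Hg. rewrite <- !RInt_scal_R.
  apply (RInt_plus (V := R_CompleteNormedModule));
    [exact (ex_RInt_scal (V := R_NormedModule) f a b k Hf)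
    |exact (ex_RInt_scal (V := R_NormedModule) g a b l Hg)].
Qed.

Lemma continuity_pt_sqr_fun (f : R -> R) (x : R) :
  continuity_pt f x -> continuity_pt (fun y => f y ^ 2) x.
Proof.
  intros Hf. apply (continuity_pt_ext (fun y => f y * f y)); [intros; ring|].
  now apply continuity_pt_mult.
Qed.

Lemma ex_RInt_sqr (u : R -> R) (a b : R) :
  a <= b -> (forall x, a <= x <= b -> continuity_pt u x) -> ex_RInt (fun x => u x ^ 2) a b.
Proof.
  intros Hab Hu. apply ex_RInt_continuity_pt; [exact Hab|].
  intros x Hx. now apply continuity_pt_sqr_fun, Hu.
Qed.

Lemma RInt_sqr_Chasles (f : R -> R) (x y z : R) :
  x <= y <= z -> (forall w, x <= w <= z -> continuity_pt f w) ->
  RInt (fun w => f w ^ 2) x y + RInt (fun w => f w ^ 2) y z = RInt (fun w => f w ^ 2) x z.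
Proof.
  intros Hxyz Hf. apply (RInt_Chasles (V := R_CompleteNormedModule));
    apply ex_RInt_sqr; try lra; intros; apply Hf; lra.
Qed.

Lemma continuity_pt_of_is_derive (f : R -> R) (x l : R) :
  is_derive f x l -> continuity_pt f x.
Proof.
  intros Hf. apply continuity_pt_filterlim.
  apply (ex_derive_continuous (K := R_AbsRing) (V := R_NormedModule)). now exists l.
Qed.

Lemma atan_pos (t : R) : 0 < t -> 0 < atan t.
Proof. intros Ht. rewrite <- atan_0. now apply atan_increasing. Qed.

Lemma pow2_gt_0 (x : R) : x <> 0 -> 0 < x ^ 2.
Proof. intros Hx. rewrite <- Rsqr_pow2. now apply Rsqr_pos_lt. Qed.

(** * Finite sums and the min-max value *)

Lemma lsum_ext (n : nat) (f g : nat -> R) :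
  (forall i, (i < n)%nat -> f i = g i) -> lsum n f = lsum n g.
Proof.
  induction n as [|n IH]; intros H; simpl; [reflexivity|].
  rewrite IH by (intros; apply H; lia). rewrite H by lia. reflexivity.
Qed.

Lemma lsum_plus (n : nat) (f g : nat -> R) :
  lsum n (fun i => f i + g i) = lsum n f + lsum n g.
Proof. induction n as [|n IH]; simpl; [|rewrite IH]; ring. Qed.

Lemma lsum_scal (n : nat) (c : R) (f : nat -> R) :
  lsum n (fun i => c * f i) = c * lsum n f.
Proof. induction n as [|n IH]; simpl; [|rewrite IH]; ring. Qed.

Lemma lsum_0 (n : nat) : lsum n (fun _ => 0) = 0.
Proof. induction n as [|n IH]; simpl; [|rewrite IH]; ring. Qed.

Lemma lsum_le (n : nat) (f g : nat -> R) :
  (forall i, (i < n)%nat -> f i <= g i) -> lsum n f <= lsum n g.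
Proof.
  induction n as [|n IH]; intros H; simpl; [lra|].
  specialize (IH (fun i Hi => H i ltac:(lia))). specialize (H n ltac:(lia)). lra.
Qed.

Lemma lsum_single (n i : nat) (f : nat -> R) :
  (i < n)%nat -> (forall j, (j < n)%nat -> j <> i -> f j = 0) -> lsum n f = f i.
Proof.
  induction n as [|n IH]; intros Hi Hf; simpl; [lia|].
  destruct (Nat.eq_dec i n) as [->|Hin].
  - rewrite (lsum_ext n f (fun _ => 0)), lsum_0 by (intros j Hj; apply Hf; lia).
    ring.
  - rewrite IH, (Hf n) by (auto; lia). ring.
Qed.

Lemma lsum_sqr_pos (n : nat) (c : nat -> R) :
  nonzero_coeffs n c -> 0 < lsum n (fun i => c i ^ 2).
Proof.
  induction n as [|n IH]; intros [i [Hi Hc]]; cbn [lsum]; [lia|].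
  assert (H0 : 0 <= lsum n (fun i => c i ^ 2)).
  { rewrite <- (lsum_0 n). apply lsum_le. intros j _. apply pow2_ge_0. }
  destruct (Nat.eq_dec i n) as [->|Hin].
  - pose proof (pow2_gt_0 _ Hc). nra.
  - assert (0 < lsum n (fun i => c i ^ 2)) by (apply IH; exists i; split; [lia|auto]).
    pose proof (pow2_ge_0 (c n)). lra.
Qed.

Definition unit_coeffs (i : nat) : nat -> R := fun j => if Nat.eqb j i then 1 else 0.

Lemma nonzero_unit_coeffs (n i : nat) : (i < n)%nat -> nonzero_coeffs n (unit_coeffs i).
Proof. intros Hi. exists i. unfold unit_coeffs. rewrite Nat.eqb_refl. split; [exact Hi|lra]. Qed.

Lemma lincomb_unit_coeffs {X : Type} (n i : nat) (f : nat -> X -> R) :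
  (i < n)%nat -> lincomb n (unit_coeffs i) f = f i.
Proof.
  intros Hi. apply functional_extensionality. intros x. unfold lincomb.
  rewrite (lsum_single n i); [|exact Hi|].
  - unfold unit_coeffs. rewrite Nat.eqb_refl. ring.
  - intros j _ Hji. unfold unit_coeffs. destruct (Nat.eqb_spec j i); [lia|ring].
Qed.

Lemma lincomb_1 {X : Type} (c : nat -> R) (f : nat -> X -> R) :
  lincomb 1 c f = fun x => c 0%nat * f 0%nat x.
Proof. apply functional_extensionality. intros x. unfold lincomb. simpl. ring. Qed.

(* Gaussian elimination of the last unknown. *)
Lemma homogeneous_system_nontrivial (n m : nat) (A : nat -> nat -> R) :
  (m < n)%nat ->
  exists c, nonzero_coeffs n c /\
    forall i, (i < m)%nat -> lsum n (fun j => c j * A i j) = 0.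
Proof.
  revert m A. induction n as [|n IH]; intros m A Hmn; [lia|].
  destruct (classic (exists i0, (i0 < m)%nat /\ A i0 n <> 0))
    as [[i0 [Hi0 Hpiv]]|Hnopiv].
  - set (skip := fun i => if Nat.ltb i i0 then i else S i).
    set (B := fun i j => A (skip i) j - A (skip i) n / A i0 n * A i0 j).
    destruct (IH (m - 1)%nat B ltac:(lia)) as [c [Hc HcB]].
    set (S0 := lsum n (fun j => c j * A i0 j)).
    exists (fun j => if Nat.ltb j n then c j else - S0 / A i0 n).
    split.
    + destruct Hc as [j [Hj Hcj]]. exists j. split; [lia|].
      destruct (Nat.ltb_spec j n); [exact Hcj|lia].
    + intros i Hi. simpl. rewrite Nat.ltb_irrefl.
      rewrite (lsum_ext n _ (fun j => c j * A i j))
        by (intros j Hj; destruct (Nat.ltb_spec j n); [reflexivity|lia]).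
      destruct (Nat.eq_dec i i0) as [->|Hii0]; [fold S0; field; exact Hpiv|].
      set (i' := if Nat.ltb i i0 then i else pred i).
      assert (Hskip : skip i' = i /\ (i' < m - 1)%nat).
      { unfold skip, i'. destruct (Nat.ltb_spec i i0).
        - destruct (Nat.ltb_spec i i0); lia.
        - destruct (Nat.ltb_spec (pred i) i0); lia. }
      destruct Hskip as [Hskip Hi'].
      specialize (HcB i' Hi'). unfold B in HcB. rewrite Hskip in HcB.
      rewrite (lsum_ext n _ (fun j => c j * A i j + - (A i n / A i0 n) * (c j * A i0 j)))
        in HcB by (intros; ring).
      rewrite lsum_plus, lsum_scal in HcB. fold S0 in HcB.
      replace (lsum n (fun j => c j * A i j)) with (A i n / A i0 n * S0) by lra.
      field. exact Hpiv.
  - exists (unit_coeffs n). split; [apply nonzero_unit_coeffs; lia|].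
    intros i Hi. rewrite (lsum_single (S n) n); [|lia|].
    2:{ intros j _ Hjn. unfold unit_coeffs. destruct (Nat.eqb_spec j n); [lia|ring]. }
    unfold unit_coeffs. rewrite Nat.eqb_refl.
    assert (A i n = 0) by (apply NNPP; intros H; apply Hnopiv; eauto).
    nra.
Qed.

Section MinMax.

Variables (X : Type) (adm : (X -> R) -> Prop) (a m : (X -> R) -> R).

Lemma minmax_ge (k : nat) (l : R) :
  (forall f : nat -> X -> R, (forall i, (i < k)%nat -> adm (f i)) ->
     (forall c, nonzero_coeffs k c -> 0 < m (lincomb k c f)) ->
     exists c, nonzero_coeffs k c /\ l * m (lincomb k c f) <= a (lincomb k c f)) ->
  Rbar_le l (minmax adm a m k).
Proof.
  intros H. apply Glb_Rbar_correct. intros r [f [Hadm [Hpos Hr]]].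
  destruct (H f Hadm Hpos) as [c [Hc Hl]].
  assert (Hq : Rbar_le (a (lincomb k c f) / m (lincomb k c f)) r).
  { rewrite Hr. apply Lub_Rbar_correct. now exists c. }
  simpl in Hq |- *. specialize (Hpos c Hc).
  apply Rle_trans with (2 := Hq). apply Rle_div_r; lra.
Qed.

Lemma minmax_le (k : nat) (f : nat -> X -> R) (l : R) :
  (1 <= k)%nat -> (forall i, (i < k)%nat -> adm (f i)) ->
  (forall c, nonzero_coeffs k c -> 0 < m (lincomb k c f)) ->
  (forall c, nonzero_coeffs k c -> a (lincomb k c f) <= l * m (lincomb k c f)) ->
  Rbar_le (minmax adm a m k) l.
Proof.
  intros Hk Hadm Hpos Hl.
  set (S := fun q => exists c, nonzero_coeffs k c /\
                       q = a (lincomb k c f) / m (lincomb k c f)).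
  assert (HSl : Rbar_le (Lub_Rbar S) l).
  { apply Lub_Rbar_correct. intros q [c [Hc ->]]. simpl. specialize (Hpos c Hc).
    apply Rle_div_l; [lra|]. now apply Hl. }
  assert (HS0 : Rbar_le (a (lincomb k (unit_coeffs 0) f) / m (lincomb k (unit_coeffs 0) f))
                        (Lub_Rbar S)).
  { apply Lub_Rbar_correct. exists (unit_coeffs 0). split; [|reflexivity].
    apply nonzero_unit_coeffs. lia. }
  destruct (Lub_Rbar S) as [r| |] eqn:Hr; simpl in HSl, HS0; try tauto.
  apply (Rbar_le_trans _ r); [|exact HSl].
  apply Glb_Rbar_correct. exists f. auto.
Qed.

Lemma minmax1_ge (x : Rbar) :
  (forall u, adm u -> 0 < m u -> Rbar_le x (a u / m u)) ->
  Rbar_le x (minmax adm a m 1).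
Proof.
  intros H. apply Glb_Rbar_correct. intros r [f [Hadm [Hpos Hr]]].
  assert (Hc0 : nonzero_coeffs 1 (unit_coeffs 0)) by (apply nonzero_unit_coeffs; lia).
  assert (Hf0 := lincomb_unit_coeffs 1 0 f ltac:(lia)).
  apply Rbar_le_trans with (a (f 0%nat) / m (f 0%nat)).
  - apply H; [apply Hadm; lia|]. rewrite <- Hf0. now apply Hpos.
  - rewrite Hr, <- Hf0. apply Lub_Rbar_correct. now exists (unit_coeffs 0).
Qed.

Lemma minmax1_le (u : X -> R) :
  adm u -> 0 < m u ->
  (forall c, a (fun x => c * u x) = c ^ 2 * a u) ->
  (forall c, m (fun x => c * u x) = c ^ 2 * m u) ->
  Rbar_le (minmax adm a m 1) (a u / m u).
Proof.
  intros Hu Hmu Ha Hm. apply minmax_le with (f := fun _ => u); [lia|auto|..];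
    intros c [i [Hi Hc]]; replace i with 0%nat in Hc by lia;
    rewrite lincomb_1, ?Ha, Hm; pose proof (pow2_gt_0 _ Hc).
  - now apply Rmult_lt_0_compat.
  - right. field. lra.
Qed.

End MinMax.

(** * Robin eigenvalues of an interval *)

Lemma C1_1d_continuity_pt (u : R -> R) (x : R) : C1_1d u -> continuity_pt u x.
Proof. intros Hu. destruct (Hu x) as [[l Hl] _]. exact (continuity_pt_of_is_derive u x l Hl). Qed.

Lemma C1_1d_continuity_pt_Derive (u : R -> R) (x : R) :
  C1_1d u -> continuity_pt (Derive u) x.
Proof. intros Hu. apply continuity_pt_filterlim. apply Hu. Qed.

Lemma C1_1d_plus (u v : R -> R) : C1_1d u -> C1_1d v -> C1_1d (fun x => u x + v x).
Proof.
  intros Hu Hv x. split; [apply (ex_derive_plus (V := R_NormedModule)); [apply Hu|apply Hv]|].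
  rewrite (functional_extensionality (Derive (fun x => u x + v x))
             (fun x => Derive u x + Derive v x))
    by (intros y; apply Derive_plus; [apply Hu|apply Hv]).
  apply continuity_pt_filterlim, continuity_pt_plus; now apply C1_1d_continuity_pt_Derive.
Qed.

Lemma C1_1d_scal (c : R) (u : R -> R) : C1_1d u -> C1_1d (fun x => c * u x).
Proof.
  intros Hu x. split; [apply ex_derive_scal, Hu|].
  rewrite (functional_extensionality (Derive (fun x => c * u x)) (fun x => c * Derive u x))
    by (intros y; apply Derive_scal).
  apply continuity_pt_filterlim, continuity_pt_mult;
    [apply continuity_pt_const; now intros ? ?|now apply C1_1d_continuity_pt_Derive].
Qed.

Lemma C1_1d_lincomb (k : nat) (c : nat -> R) (f : nat -> R -> R) :
  (forall i, (i < k)%nat -> C1_1d (f i)) -> C1_1d (lincomb k c f).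
Proof.
  induction k as [|k IH]; intros Hf.
  - change (C1_1d (fun _ => 0)). intros x.
    split; [apply (ex_derive_const (V := R_NormedModule))|].
    rewrite (functional_extensionality (Derive (fun _ => 0)) (fun _ => 0))
      by (intros; apply Derive_const).
    apply continuous_const.
  - apply C1_1d_plus; [apply IH; intros; apply Hf; lia|apply C1_1d_scal, Hf; lia].
Qed.

(* Integrating [(g u^2)' = g' u^2 + 2 g u u'] and completing the square, using the
   Riccati equation [g' = - nu - g^2]. *)
Lemma riccati_identity (u g dg : R -> R) (nu x0 x1 : R) :
  x0 <= x1 -> C1_1d u ->
  (forall x, x0 <= x <= x1 -> is_derive g x (dg x)) ->
  (forall x, x0 <= x <= x1 -> continuity_pt dg x) ->
  (forall x, x0 <= x <= x1 -> dg x = - nu - g x ^ 2) ->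
  RInt (fun x => Derive u x ^ 2) x0 x1 - nu * RInt (fun x => u x ^ 2) x0 x1
    - (g x1 * u x1 ^ 2 - g x0 * u x0 ^ 2)
  = RInt (fun x => (Derive u x - g x * u x) ^ 2) x0 x1.
Proof.
  intros H01 Hu Hg Hdg Hric.
  assert (Hgc : forall x, x0 <= x <= x1 -> continuity_pt g x)
    by (intros x Hx; eapply continuity_pt_of_is_derive, Hg, Hx).
  set (dh := fun x => dg x * u x ^ 2 + g x * (INR 2 * Derive u x * u x ^ 1)).
  assert (Hh : is_RInt dh x0 x1 (g x1 * u x1 ^ 2 - g x0 * u x0 ^ 2)).
  { apply (is_RInt_derive (V := R_CompleteNormedModule) (fun x => g x * u x ^ 2));
      intros x Hx; rewrite Rmin_left, Rmax_right in Hx by exact H01.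
    - apply Derive.is_derive_mult; [now apply Hg|].
      apply is_derive_pow, Derive_correct, Hu.
    - apply continuity_pt_filterlim. unfold dh.
      pose proof (C1_1d_continuity_pt u x Hu).
      pose proof (C1_1d_continuity_pt_Derive u x Hu).
      repeat first [apply continuity_pt_plus | apply continuity_pt_mult
                   | apply continuity_pt_const; now intros ? ? | apply continuity_pt_sqr_fun];
        auto. }
  assert (Hdu : ex_RInt (fun x => Derive u x ^ 2) x0 x1)
    by (apply ex_RInt_sqr; auto; intros; now apply C1_1d_continuity_pt_Derive).
  assert (Hu2 : ex_RInt (fun x => u x ^ 2) x0 x1)
    by (apply ex_RInt_sqr; auto; intros; now apply C1_1d_continuity_pt).
  rewrite (RInt_ext (fun x => (Derive u x - g x * u x) ^ 2)
                    (fun x => 1 * (1 * Derive u x ^ 2 + - nu * u x ^ 2) + -1 * dh x)).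
  2:{ intros x Hx. rewrite Rmin_left, Rmax_right in Hx by exact H01. unfold dh.
      eq_at_R. rewrite Hric by lra. simpl. ring. }
  rewrite RInt_lin2, RInt_lin2, (is_RInt_unique _ _ _ _ Hh); auto.
  - eq_at_R. ring.
  - apply (ex_RInt_plus (V := R_NormedModule));
      [exact (ex_RInt_scal (V := R_NormedModule) _ _ _ 1 Hdu)
      |exact (ex_RInt_scal (V := R_NormedModule) _ _ _ (- nu) Hu2)].
  - now exists (g x1 * u x1 ^ 2 - g x0 * u x0 ^ 2).
Qed.

Section RobinInterval.

Variables (alpha b t : R).
Hypotheses (Halpha : 0 < alpha) (Hb : 0 < b) (Ht : 0 < t)
           (Htb : t * atan t = alpha * b / 2).

Lemma robin_half_phase : alpha / t * (b / 2) = atan t.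
Proof. apply (Rmult_eq_reg_l t); [|lra]. field_simplify; lra. Qed.

Lemma cos_robin_pos (a0 x : R) :
  a0 <= x <= a0 + b -> 0 < cos (alpha / t * (x - (a0 + b / 2))).
Proof.
  intros Hx. pose proof robin_half_phase as Hph. pose proof (atan_pos t Ht).
  destruct (atan_bound t) as [_ Hpi].
  assert (Hr : 0 < alpha / t) by (now apply Rdiv_lt_0_compat).
  apply cos_gt_0; nra.
Qed.

Definition tan_multiplier (c x : R) : R :=
  - (alpha / t) * (sin (alpha / t * (x - c)) / cos (alpha / t * (x - c))).

Lemma robin_interval_identity (a0 : R) (u : R -> R) :
  C1_1d u ->
  RInt (fun x => Derive u x ^ 2) a0 (a0 + b) + alpha * (u a0 ^ 2 + u (a0 + b) ^ 2)
    - (alpha / t) ^ 2 * RInt (fun x => u x ^ 2) a0 (a0 + b)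
  = RInt (fun x => (Derive u x - tan_multiplier (a0 + b / 2) x * u x) ^ 2) a0 (a0 + b).
Proof.
  intros Hu. set (r := alpha / t). set (c := a0 + b / 2).
  set (g := tan_multiplier c).
  assert (Hg : forall x, a0 <= x <= a0 + b -> is_derive g x (- (r * r) - g x ^ 2)).
  { intros x Hx. pose proof (cos_robin_pos a0 x Hx) as Hcos.
    unfold g, tan_multiplier, r, c in *. auto_derive;
      replace (x + - (a0 + b / 2)) with (x - (a0 + b / 2)) by ring; [lra|field; lra]. }
  rewrite <- (riccati_identity u g (fun x => - (r * r) - g x ^ 2) (r * r) a0 (a0 + b));
    [|lra|exact Hu|exact Hg| |intros; reflexivity].
  - assert (Htan : sin (atan t) / cos (atan t) = t) by apply atan_right_inv.
    destruct (atan_bound t). pose proof (atan_pos t Ht).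
    assert (Hcos : 0 < cos (atan t)) by (apply cos_gt_0; lra).
    pose proof robin_half_phase as Hph. fold r in Hph.
    assert (Hg0 : g a0 = alpha).
    { unfold g, tan_multiplier. fold r. replace (r * (a0 - c)) with (- atan t) by (unfold c; lra).
      rewrite sin_neg, cos_neg.
      replace (- sin (atan t) / cos (atan t)) with (- (sin (atan t) / cos (atan t)))
        by (field; lra).
      rewrite Htan. unfold r. field. lra. }
    assert (Hg1 : g (a0 + b) = - alpha).
    { unfold g, tan_multiplier. fold r. replace (r * (a0 + b - c)) with (atan t) by (unfold c; lra).
      rewrite Htan. unfold r. field. lra. }
    rewrite Hg0, Hg1. unfold r. ring.
  - intros x Hx. apply continuity_pt_minus; [apply continuity_pt_const; now intros ? ?|].
    apply continuity_pt_sqr_fun. eapply continuity_pt_of_is_derive, Hg, Hx.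
Qed.

Lemma robin_interval_bound (a0 : R) (u : R -> R) :
  C1_1d u ->
  (alpha / t) ^ 2 * RInt (fun x => u x ^ 2) a0 (a0 + b)
  <= RInt (fun x => Derive u x ^ 2) a0 (a0 + b) + alpha * (u a0 ^ 2 + u (a0 + b) ^ 2).
Proof.
  intros Hu. pose proof (robin_interval_identity a0 u Hu) as Hid.
  assert (0 <= RInt (fun x => (Derive u x - tan_multiplier (a0 + b / 2) x * u x) ^ 2)
                    a0 (a0 + b))
    by (apply RInt_ge_0_R; [lra|intros; apply pow2_ge_0]).
  lra.
Qed.

Definition robin_profile (x : R) : R := cos (alpha / t * (x - b / 2)).

Lemma is_derive_robin_profile (x : R) :
  is_derive robin_profile x (- (alpha / t) * sin (alpha / t * (x - b / 2))).
Proof.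
  unfold robin_profile. auto_derive; [exact I|].
  replace (x + - (b / 2)) with (x - b / 2) by ring. ring.
Qed.

Lemma C1_1d_robin_profile : C1_1d robin_profile.
Proof.
  intros x. split; [eexists; apply is_derive_robin_profile|].
  rewrite (functional_extensionality (Derive robin_profile)
             (fun x => - (alpha / t) * sin (alpha / t * (x - b / 2))))
    by (intros y; apply is_derive_unique, is_derive_robin_profile).
  apply (ex_derive_continuous (K := R_AbsRing) (V := R_NormedModule)).
  auto_derive. exact I.
Qed.

Lemma robin_profile_mass_pos : 0 < RInt (fun x => robin_profile x ^ 2) 0 b.
Proof.
  apply RInt_gt_0; [exact Hb| |].
  - intros x Hx. apply pow2_gt_0. unfold robin_profile.
    pose proof (cos_robin_pos 0 x ltac:(lra)) as Hcos.
    replace (0 + b / 2) with (b / 2) in Hcos by ring. lra.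
  - intros x _. apply continuity_pt_filterlim, continuity_pt_sqr_fun.
    apply C1_1d_continuity_pt, C1_1d_robin_profile.
Qed.

(* The profile solves [w' = tan_multiplier w], so the Riccati remainder vanishes. *)
Lemma robin_profile_rayleigh :
  RInt (fun x => Derive robin_profile x ^ 2) 0 b
    + alpha * (robin_profile 0 ^ 2 + robin_profile b ^ 2)
  = (alpha / t) ^ 2 * RInt (fun x => robin_profile x ^ 2) 0 b.
Proof.
  pose proof (robin_interval_identity 0 robin_profile C1_1d_robin_profile) as Hid.
  replace (0 + b) with b in Hid by ring.
  rewrite (RInt_ext (fun x => (Derive robin_profile x
                               - tan_multiplier (0 + b / 2) x * robin_profile x) ^ 2)
                    (fun _ => 0)), RInt_const in Hid.
  - change (scal (b - 0) 0) with ((b - 0) * 0) in Hid. lra.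
  - intros x Hx. rewrite Rmin_left, Rmax_right in Hx by lra.
    pose proof (cos_robin_pos 0 x ltac:(lra)) as Hcos.
    rewrite (is_derive_unique _ _ _ (is_derive_robin_profile x)).
    unfold tan_multiplier, robin_profile. replace (0 + b / 2) with (b / 2) in * by ring.
    eq_at_R. field. lra.
Qed.

(* Summing over [n] consecutive intervals of length [b]: the boundary terms at
   the interior nodes vanish. *)
Lemma robin_chain_bound (n : nat) (u : R -> R) :
  C1_1d u -> (1 <= n)%nat ->
  (forall i, (1 <= i < n)%nat -> u (INR i * b) = 0) ->
  (alpha / t) ^ 2 * RInt (fun x => u x ^ 2) 0 (INR n * b)
  <= RInt (fun x => Derive u x ^ 2) 0 (INR n * b) + alpha * (u 0 ^ 2 + u (INR n * b) ^ 2).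
Proof.
  intros Hu Hn Hnodes. induction n as [|n IH]; [lia|].
  destruct (Nat.eq_dec n 0) as [->|Hn0].
  - replace (INR 1 * b) with (0 + b) by (simpl; ring). now apply robin_interval_bound.
  - specialize (IH ltac:(lia) (fun i Hi => Hnodes i ltac:(lia))).
    assert (Hun : u (INR n * b) = 0) by (apply Hnodes; lia).
    assert (0 <= INR n * b) by (apply Rmult_le_pos; [apply pos_INR|lra]).
    pose proof (robin_interval_bound (INR n * b) u Hu) as Hlast.
    replace (INR (S n) * b) with (INR n * b + b) by (rewrite S_INR; ring).
    assert (Hu' : forall x, continuity_pt u x) by (intros; now apply C1_1d_continuity_pt).
    assert (HDu : forall x, continuity_pt (Derive u) x)
      by (intros; now apply C1_1d_continuity_pt_Derive).
    rewrite <- (RInt_sqr_Chasles u 0 (INR n * b)), <- (RInt_sqr_Chasles (Derive u) 0 (INR n * b))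
      by (auto; lra).
    rewrite Hun in IH, Hlast. lra.
Qed.

End RobinInterval.

Lemma exists_mul_atan (beta : R) : 0 < beta -> exists t, 0 < t /\ t * atan t = beta.
Proof.
  intros Hbeta. pose proof (atan_pos 1 Rlt_0_1) as Ha1.
  set (T := 1 + beta / atan 1).
  assert (HT : 1 < T) by (unfold T; pose proof (Rdiv_lt_0_compat _ _ Hbeta Ha1); lra).
  assert (HaT : atan 1 < atan T) by (apply atan_increasing; lra).
  destruct (IVT (fun t => t * atan t - beta) 0 T) as [t [Ht Hft]].
  - intros x. apply continuity_pt_minus; [apply continuity_pt_mult|].
    + apply derivable_continuous_pt, derivable_pt_id.
    + apply derivable_continuous_pt, derivable_pt_atan.
    + apply continuity_pt_const. now intros ? ?.
  - lra.
  - rewrite atan_0. lra.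
  - assert (T * atan 1 = atan 1 + beta) by (unfold T; field; lra). nra.
  - exists t. split; [|lra]. destruct (Rle_lt_or_eq_dec 0 t) as [H|H]; [lra|exact H|].
    subst. rewrite atan_0 in Hft. lra.
Qed.

Lemma robin_eig_interval_ge (alpha p t : R) (k : nat) :
  0 < alpha -> 0 < p -> 0 < t -> t * atan t = alpha * p / 2 -> (1 <= k)%nat ->
  Rbar_le ((alpha / t) ^ 2) (robin_eig_interval alpha (INR k * p) k).
Proof.
  intros Halpha Hp Ht Htp Hk. apply minmax_ge. intros f Hf Hpos.
  destruct (homogeneous_system_nontrivial k (k - 1) (fun i j => f j (INR (S i) * p)))
    as [c [Hc Hnodes]]; [lia|].
  exists c. split; [exact Hc|]. apply robin_chain_bound; auto.
  - now apply C1_1d_lincomb.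
  - intros [|i] Hi; [lia|]. apply (Hnodes i). lia.
Qed.

(** * The first Robin eigenvalue of a square *)

Lemma int_sq_scal (s c : R) (G : R * R -> R) :
  int_sq s (fun p => c * G p) = c * int_sq s G.
Proof.
  unfold int_sq. rewrite <- RInt_scal_R. apply RInt_ext. intros x _. apply RInt_scal_R.
Qed.

Lemma int_sq_ge_0 (s : R) (G : R * R -> R) :
  0 <= s -> (forall p, 0 <= G p) -> 0 <= int_sq s G.
Proof.
  intros Hs HG. apply RInt_ge_0_R; [exact Hs|]. intros x _. now apply RInt_ge_0_R.
Qed.

Lemma energy_Q_scal (alpha s c : R) (u : R * R -> R) :
  energy_Q alpha s (fun p => c * u p) = c ^ 2 * energy_Q alpha s u.
Proof.
  unfold energy_Q.
  rewrite (functional_extensionality _ (fun p => c ^ 2 * (dx u p ^ 2 + dy u p ^ 2)))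
    by (intros p; unfold dx, dy; rewrite !Derive_scal; ring).
  rewrite int_sq_scal.
  rewrite (functional_extensionality (fun x => (c * u (x, 0)) ^ 2 + (c * u (x, s)) ^ 2)
             (fun x => c ^ 2 * (u (x, 0) ^ 2 + u (x, s) ^ 2))) by (intros; ring).
  rewrite (functional_extensionality (fun y => (c * u (0, y)) ^ 2 + (c * u (s, y)) ^ 2)
             (fun y => c ^ 2 * (u (0, y) ^ 2 + u (s, y) ^ 2))) by (intros; ring).
  rewrite !RInt_scal_R. eq_at_R. ring.
Qed.

Lemma mass_Q_scal (s c : R) (u : R * R -> R) :
  mass_Q s (fun p => c * u p) = c ^ 2 * mass_Q s u.
Proof.
  unfold mass_Q. rewrite <- int_sq_scal. f_equal.
  apply functional_extensionality. intros p. ring.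
Qed.

Lemma energy_Q_ge_0 (alpha s : R) (u : R * R -> R) :
  0 <= alpha -> 0 <= s -> 0 <= energy_Q alpha s u.
Proof.
  intros Halpha Hs. unfold energy_Q.
  assert (Hsq : forall x y : R, 0 <= x ^ 2 + y ^ 2)
    by (intros x y; pose proof (pow2_ge_0 x); pose proof (pow2_ge_0 y); lra).
  pose proof (int_sq_ge_0 s (fun p => dx u p ^ 2 + dy u p ^ 2) Hs (fun p => Hsq _ _)).
  pose proof (RInt_ge_0_R (fun x => u (x, 0) ^ 2 + u (x, s) ^ 2) 0 s Hs (fun x _ => Hsq _ _)).
  pose proof (RInt_ge_0_R (fun y => u (0, y) ^ 2 + u (s, y) ^ 2) 0 s Hs (fun y _ => Hsq _ _)).
  nra.
Qed.

Definition self_tensor (w : R -> R) : R * R -> R := fun q => w (fst q) * w (snd q).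

Lemma dx_self_tensor (w : R -> R) (p : R * R) :
  dx (self_tensor w) p = Derive w (fst p) * w (snd p).
Proof.
  unfold dx, self_tensor. simpl.
  rewrite (Derive_ext _ (fun x => w (snd p) * w x)) by (intros; apply Rmult_comm).
  rewrite Derive_scal. apply Rmult_comm.
Qed.

Lemma dy_self_tensor (w : R -> R) (p : R * R) :
  dy (self_tensor w) p = w (fst p) * Derive w (snd p).
Proof. unfold dy, self_tensor. simpl. apply Derive_scal. Qed.

Lemma continuous_tensor (f g : R -> R) (p : R * R) :
  continuity_pt f (fst p) -> continuity_pt g (snd p) ->
  continuous (fun q : R * R => f (fst q) * g (snd q)) p.
Proof.
  intros Hf Hg.
  apply (continuous_mult (U := prod_UniformSpace R_UniformSpace R_UniformSpace)
           (fun q => f (fst q)) (fun q => g (snd q)));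
    apply (continuous_comp (U := prod_UniformSpace R_UniformSpace R_UniformSpace)
                           (V := R_UniformSpace));
    [apply continuous_fst| |apply continuous_snd|];
    now apply continuity_pt_filterlim.
Qed.

Lemma C1_2d_self_tensor (w : R -> R) : C1_1d w -> C1_2d (self_tensor w).
Proof.
  intros Hw p. split; [|split; [|split]].
  - unfold self_tensor. simpl.
    apply (ex_derive_ext (fun x => w (snd p) * w x)); [intros; apply Rmult_comm|].
    apply ex_derive_scal, Hw.
  - unfold self_tensor. simpl. apply ex_derive_scal, Hw.
  - rewrite (functional_extensionality (dx (self_tensor w))
               (fun q => Derive w (fst q) * w (snd q))) by apply dx_self_tensor.
    now apply continuous_tensor;
      [apply C1_1d_continuity_pt_Derive|apply C1_1d_continuity_pt].
  - rewrite (functional_extensionality (dy (self_tensor w))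
               (fun q => w (fst q) * Derive w (snd q))) by apply dy_self_tensor.
    now apply continuous_tensor;
      [apply C1_1d_continuity_pt|apply C1_1d_continuity_pt_Derive].
Qed.

Lemma mass_Q_self_tensor (s : R) (w : R -> R) :
  mass_Q s (self_tensor w) = RInt (fun x => w x ^ 2) 0 s * RInt (fun x => w x ^ 2) 0 s.
Proof.
  unfold mass_Q, int_sq, self_tensor. simpl.
  rewrite (RInt_ext _ (fun x => RInt (fun y => w y ^ 2) 0 s * w x ^ 2)).
  - apply RInt_scal_R.
  - intros x _. rewrite Rmult_comm, <- RInt_scal_R. apply RInt_ext. intros y _. eq_at_R. ring.
Qed.

Lemma energy_Q_self_tensor (alpha s : R) (w : R -> R) :
  C1_1d w -> 0 <= s ->
  energy_Q alpha s (self_tensor w)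
  = 2 * RInt (fun x => w x ^ 2) 0 s
      * (RInt (fun x => Derive w x ^ 2) 0 s + alpha * (w 0 ^ 2 + w s ^ 2)).
Proof.
  intros Hw Hs.
  set (N := RInt (fun x => w x ^ 2) 0 s). set (D := RInt (fun x => Derive w x ^ 2) 0 s).
  assert (HN : ex_RInt (fun x => w x ^ 2) 0 s)
    by (apply ex_RInt_sqr; auto; intros; now apply C1_1d_continuity_pt).
  assert (HD : ex_RInt (fun x => Derive w x ^ 2) 0 s)
    by (apply ex_RInt_sqr; auto; intros; now apply C1_1d_continuity_pt_Derive).
  unfold energy_Q, int_sq.
  rewrite (RInt_ext _ (fun x => D * w x ^ 2 + N * Derive w x ^ 2)).
  2:{ intros x _. rewrite (RInt_ext _ (fun y => Derive w x ^ 2 * w y ^ 2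
                                               + w x ^ 2 * Derive w y ^ 2)).
      - rewrite RInt_lin2 by assumption. fold N D. eq_at_R. ring.
      - intros y _. rewrite dx_self_tensor, dy_self_tensor. simpl. eq_at_R. ring. }
  unfold self_tensor. cbn [fst snd].
  rewrite RInt_lin2 by assumption. fold N D.
  rewrite (RInt_ext (fun x => (w x * w 0) ^ 2 + (w x * w s) ^ 2)
                    (fun x => (w 0 ^ 2 + w s ^ 2) * w x ^ 2)) by (intros; eq_at_R; ring).
  rewrite (RInt_ext (fun y => (w 0 * w y) ^ 2 + (w s * w y) ^ 2)
                    (fun x => (w 0 ^ 2 + w s ^ 2) * w x ^ 2)) by (intros; eq_at_R; ring).
  rewrite RInt_scal_R. fold N. eq_at_R. ring.
Qed.

Lemma robin_eig_square_rayleigh (alpha s : R) (u : R * R -> R) :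
  C1_2d u -> 0 < mass_Q s u ->
  Rbar_le (robin_eig_square alpha s 1) (energy_Q alpha s u / mass_Q s u).
Proof.
  intros Hu HM. apply minmax1_le; auto.
  - intros c. apply energy_Q_scal.
  - intros c. apply mass_Q_scal.
Qed.

Lemma robin_eig_square_ge_0 (alpha s : R) :
  0 <= alpha -> 0 <= s -> Rbar_le 0 (robin_eig_square alpha s 1).
Proof.
  intros Halpha Hs. apply minmax1_ge. intros u _ HM. simpl.
  apply Rdiv_le_0_compat; [now apply energy_Q_ge_0|exact HM].
Qed.

Lemma robin_eig_square_le (alpha s t : R) :
  0 < alpha -> 0 < s -> 0 < t -> t * atan t = alpha * s / 2 ->
  Rbar_le (robin_eig_square alpha s 1) (2 * (alpha / t) ^ 2).
Proof.
  intros Halpha Hs Ht Hts. set (w := robin_profile alpha s t).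
  set (N := RInt (fun x => w x ^ 2) 0 s).
  pose proof (robin_profile_mass_pos alpha s t Halpha Hs Ht Hts) as HN. fold w N in HN.
  assert (HM : mass_Q s (self_tensor w) = N * N) by apply mass_Q_self_tensor.
  assert (HE : energy_Q alpha s (self_tensor w) = 2 * N * ((alpha / t) ^ 2 * N)).
  { rewrite energy_Q_self_tensor by (apply C1_1d_robin_profile || lra).
    unfold w, N. now rewrite robin_profile_rayleigh. }
  replace (2 * (alpha / t) ^ 2) with (energy_Q alpha s (self_tensor w) / mass_Q s (self_tensor w))
    by (rewrite HE, HM; field; lra).
  apply robin_eig_square_rayleigh; [apply C1_2d_self_tensor, C1_1d_robin_profile|].
  rewrite HM. nra.
Qed.

(** * Disjoint unions of squares *)

Definition on_square (u : R * R -> R) (i : nat) : nat * (R * R) -> R :=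
  fun jp => if Nat.eqb (fst jp) i then u (snd jp) else 0.

Lemma lincomb_on_square (k j : nat) (c : nat -> R) (u : R * R -> R) :
  (j < k)%nat -> (fun p => lincomb k c (on_square u) (j, p)) = (fun p => c j * u p).
Proof.
  intros Hj. apply functional_extensionality. intros p. unfold lincomb, on_square. simpl.
  rewrite (lsum_single k j); [|exact Hj|].
  - now rewrite Nat.eqb_refl.
  - intros i _ Hij. destruct (Nat.eqb_spec j i); [lia|ring].
Qed.

Lemma C1_2d_zero : C1_2d (fun _ => 0).
Proof.
  assert (H0 : forall f : R -> R, (forall x, f x = 0) -> Derive f = fun _ => 0).
  { intros f Hf. apply functional_extensionality. intros x.
    rewrite (Derive_ext f (fun _ => 0)) by exact Hf. apply Derive_const. }
  intros p. repeat split; try apply (ex_derive_const (V := R_NormedModule));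
    [unfold dx|unfold dy]; rewrite (functional_extensionality _ (fun _ : R * R => 0));
    try apply continuous_const; intros q; rewrite H0; reflexivity.
Qed.

Lemma robin_eig_squares_le_square (alpha A : R) (k : nat) :
  (1 <= k)%nat ->
  Rbar_le (robin_eig_squares alpha A k k) (robin_eig_square alpha (sqrt (A / INR k)) 1).
Proof.
  intros Hk. set (s := sqrt (A / INR k)).
  apply minmax1_ge. intros u Hu HM.
  assert (Hsum : forall (q : (R * R -> R) -> R),
             (forall c, q (fun p => c * u p) = c ^ 2 * q u) -> forall c,
             lsum k (fun j => q (fun p => lincomb k c (on_square u) (j, p)))
             = lsum k (fun i => c i ^ 2) * q u).
  { intros q Hq c. rewrite Rmult_comm, <- lsum_scal. apply lsum_ext. intros j Hj.
    rewrite lincomb_on_square, Hq by exact Hj. ring. }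
  apply minmax_le with (f := on_square u); [exact Hk| | |].
  - intros i Hi j Hj. unfold on_square. simpl.
    destruct (Nat.eqb j i); [exact Hu|exact C1_2d_zero].
  - intros c Hc. unfold mass_S. fold s. rewrite (Hsum _ (fun c0 => mass_Q_scal s c0 u)).
    apply Rmult_lt_0_compat; [now apply lsum_sqr_pos|exact HM].
  - intros c Hc. unfold energy_S, mass_S. fold s.
    rewrite (Hsum _ (fun c0 => energy_Q_scal alpha s c0 u)),
            (Hsum _ (fun c0 => mass_Q_scal s c0 u)).
    right. field. lra.
Qed.

Lemma robin_eig_square_le_squares (alpha A l : R) (k : nat) :
  0 <= alpha -> (1 <= k)%nat ->
  robin_eig_square alpha (sqrt (A / INR k)) 1 = Finite l ->
  Rbar_le l (robin_eig_squares alpha A k k).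
Proof.
  intros Halpha Hk Hl. set (s := sqrt (A / INR k)). fold s in Hl.
  assert (Hs : 0 <= s) by apply sqrt_pos.
  assert (Hl0 : 0 <= l) by (pose proof (robin_eig_square_ge_0 alpha s Halpha Hs) as H;
                            now rewrite Hl in H).
  assert (Hray : forall u, C1_2d u -> l * mass_Q s u <= energy_Q alpha s u).
  { intros u Hu. destruct (Rlt_le_dec 0 (mass_Q s u)) as [HM|HM].
    - pose proof (robin_eig_square_rayleigh alpha s u Hu HM) as H. rewrite Hl in H.
      simpl in H. apply Rle_div_r in H; lra.
    - pose proof (energy_Q_ge_0 alpha s u Halpha Hs). nra. }
  apply minmax_ge. intros F HF Hpos. exists (unit_coeffs 0).
  split; [apply nonzero_unit_coeffs; lia|].
  rewrite lincomb_unit_coeffs by lia.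
  unfold energy_S, mass_S. fold s. rewrite <- lsum_scal.
  apply lsum_le. intros j Hj. apply Hray, HF; [lia|exact Hj].
Qed.

(** * Convexity of ln (t atan t) in t^(-2) *)

Lemma MVT_closed (f df : R -> R) (a b : R) :
  a <= b -> (forall x, a <= x <= b -> is_derive f x (df x)) ->
  exists c, a <= c <= b /\ f b - f a = df c * (b - a).
Proof.
  intros Hab Hf. destruct (MVT_gen f a b df) as [c [Hc E]].
  - intros x Hx. rewrite Rmin_left, Rmax_right in Hx by exact Hab. apply Hf; lra.
  - intros x Hx. rewrite Rmin_left, Rmax_right in Hx by exact Hab.
    eapply continuity_pt_of_is_derive. now apply Hf.
  - rewrite Rmin_left, Rmax_right in Hc by exact Hab. now exists c.
Qed.

Lemma le_of_derive_nonneg (f df : R -> R) (a b : R) :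
  a <= b -> (forall x, a <= x <= b -> is_derive f x (df x)) ->
  (forall x, a <= x <= b -> 0 <= df x) -> f a <= f b.
Proof.
  intros Hab Hf Hdf. destruct (MVT_closed f df a b Hab Hf) as [c [Hc E]].
  assert (0 <= df c * (b - a)) by (apply Rmult_le_pos; [apply Hdf|]; lra). lra.
Qed.

Lemma lt_of_derive_neg (f df : R -> R) (a b : R) :
  a < b -> (forall x, a <= x <= b -> is_derive f x (df x)) ->
  (forall x, a <= x <= b -> df x < 0) -> f b < f a.
Proof.
  intros Hab Hf Hdf. destruct (MVT_closed f df a b ltac:(lra) Hf) as [c [Hc E]].
  assert (df c * (b - a) < 0) by (apply Rmult_neg_pos; [apply Hdf|]; lra). lra.
Qed.

Lemma midpoint_convex_of_derive_incr (f df : R -> R) (a b : R) :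
  a <= b -> (forall x, a <= x <= b -> is_derive f x (df x)) ->
  (forall x y, a <= x <= y -> y <= b -> df x <= df y) ->
  2 * f ((a + b) / 2) <= f a + f b.
Proof.
  intros Hab Hf Hdf. set (m := (a + b) / 2).
  destruct (MVT_closed f df a m) as [c1 [Hc1 E1]];
    [unfold m; lra|intros; apply Hf; unfold m in *; lra|].
  destruct (MVT_closed f df m b) as [c2 [Hc2 E2]];
    [unfold m; lra|intros; apply Hf; unfold m in *; lra|].
  assert (df c1 * (m - a) <= df c2 * (b - m)).
  { replace (b - m) with (m - a) by (unfold m; field).
    apply Rmult_le_compat_r; [unfold m; lra|]. apply Hdf; unfold m in *; lra. }
  lra.
Qed.

Lemma atan_ge (t : R) : 0 <= t -> t / (1 + t ^ 2) <= atan t.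
Proof.
  intros Ht.
  enough (0 - 0 / (1 + 0 ^ 2) <= atan t - t / (1 + t ^ 2)) by lra.
  rewrite <- atan_0 at 1.
  apply (le_of_derive_nonneg (fun x => atan x - x / (1 + x ^ 2))
           (fun x => 2 * x ^ 2 / (1 + x ^ 2) ^ 2)); [exact Ht|..]; intros x _;
    pose proof (pow2_ge_0 x).
  - auto_derive; [lra|field; lra].
  - apply Rdiv_le_0_compat; [lra|]. apply pow_lt. lra.
Qed.

Lemma div_atan_le (a b : R) : 0 < a <= b -> a / atan a <= b / atan b.
Proof.
  intros [Ha Hab].
  apply (le_of_derive_nonneg (fun x => x / atan x)
           (fun x => (atan x - x / (1 + x ^ 2)) / atan x ^ 2)); [exact Hab|..];
    intros x Hx; pose proof (atan_pos x ltac:(lra)).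
  - pose proof (pow2_ge_0 x). auto_derive; [lra|field; lra].
  - apply Rdiv_le_0_compat; [|now apply pow_lt].
    pose proof (atan_ge x ltac:(lra)). lra.
Qed.

(* [t ^ 2] times the logarithmic derivative [t K'(t) / K(t)] of [K t = t * atan t]. *)
Definition phi_t_atan (t : R) : R := t ^ 2 + t ^ 3 / ((1 + t ^ 2) * atan t).

Lemma phi_t_atan_pos (t : R) : 0 < t -> 0 < phi_t_atan t.
Proof.
  intros Ht. unfold phi_t_atan. pose proof (atan_pos t Ht).
  pose proof (pow_lt t 2 Ht). pose proof (pow_lt t 3 Ht).
  assert (0 < t ^ 3 / ((1 + t ^ 2) * atan t))
    by (apply Rdiv_lt_0_compat; [|apply Rmult_lt_0_compat]; lra).
  lra.
Qed.

Lemma phi_t_atan_le (a b : R) : 0 < a <= b -> phi_t_atan a <= phi_t_atan b.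
Proof.
  intros [Ha Hab]. unfold phi_t_atan.
  assert (Hsplit : forall t, 0 < t ->
            t ^ 3 / ((1 + t ^ 2) * atan t) = t ^ 2 / (1 + t ^ 2) * (t / atan t)).
  { intros t Ht. pose proof (atan_pos t Ht). pose proof (pow2_ge_0 t). field. lra. }
  rewrite !Hsplit by lra.
  pose proof (pow2_ge_0 a). pose proof (atan_pos a Ha).
  assert (Hsq : a ^ 2 <= b ^ 2) by (apply pow_incr; lra).
  assert (Hfrac : a ^ 2 / (1 + a ^ 2) <= b ^ 2 / (1 + b ^ 2)).
  { assert (Hfr : forall t, t ^ 2 / (1 + t ^ 2) = 1 - / (1 + t ^ 2))
      by (intros t; pose proof (pow2_ge_0 t); field; lra).
    rewrite !Hfr. enough (/ (1 + b ^ 2) <= / (1 + a ^ 2)) by lra.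
    apply Rinv_le_contravar; lra. }
  assert (Hfrac0 : 0 <= a ^ 2 / (1 + a ^ 2)) by (apply Rdiv_le_0_compat; lra).
  assert (Hdiv0 : 0 <= a / atan a) by (apply Rdiv_le_0_compat; lra).
  pose proof (Rmult_le_compat _ _ _ _ Hfrac0 Hdiv0 Hfrac (div_atan_le a b ltac:(lra))).
  lra.
Qed.

Definition ln_t_atan (y : R) : R := ln (atan (/ sqrt y)) - ln y / 2.

Lemma ln_t_atan_inv_sqr (t : R) : 0 < t -> ln_t_atan (/ t ^ 2) = ln (t * atan t).
Proof.
  intros Ht. unfold ln_t_atan. pose proof (pow_lt t 2 Ht).
  assert (E : sqrt (/ t ^ 2) = / t) by (rewrite sqrt_inv, sqrt_pow2; lra).
  rewrite E, Rinv_inv, ln_Rinv, ln_mult by (auto using atan_pos).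
  replace (t ^ 2) with (t * t) by ring. rewrite ln_mult by exact Ht. field.
Qed.

Lemma is_derive_ln_t_atan (y : R) :
  0 < y -> is_derive ln_t_atan y (- phi_t_atan (/ sqrt y) / 2).
Proof.
  intros Hy. unfold ln_t_atan, phi_t_atan.
  pose proof (sqrt_lt_R0 y Hy) as Hr. pose proof (sqrt_sqrt y ltac:(lra)) as Hrr.
  pose proof (atan_pos _ (Rinv_0_lt_compat _ Hr)).
  auto_derive; [repeat split; lra|].
  set (r := sqrt y) in *. rewrite <- Hrr.
  field. repeat split; nra.
Qed.

Lemma ln_t_atan_decr (y1 y2 : R) : 0 < y1 < y2 -> ln_t_atan y2 < ln_t_atan y1.
Proof.
  intros Hy. apply (lt_of_derive_neg _ (fun y => - phi_t_atan (/ sqrt y) / 2)); [lra|..];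
    intros y Hy'; [apply is_derive_ln_t_atan; lra|].
  pose proof (phi_t_atan_pos _ (Rinv_0_lt_compat _ (sqrt_lt_R0 y ltac:(lra)))). lra.
Qed.

Lemma ln_t_atan_midpoint_convex (y1 y2 : R) :
  0 < y1 -> 0 < y2 -> 2 * ln_t_atan ((y1 + y2) / 2) <= ln_t_atan y1 + ln_t_atan y2.
Proof.
  assert (Hconv : forall a b, 0 < a <= b ->
            2 * ln_t_atan ((a + b) / 2) <= ln_t_atan a + ln_t_atan b).
  { intros a b Hab.
    apply (midpoint_convex_of_derive_incr _ (fun y => - phi_t_atan (/ sqrt y) / 2));
      [lra|intros; apply is_derive_ln_t_atan; lra|].
    intros x y Hxy _. pose proof (sqrt_lt_R0 x ltac:(lra)).
    assert (sqrt x <= sqrt y) by (apply sqrt_le_1_alt; lra).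
    assert (/ sqrt y <= / sqrt x) by (apply Rinv_le_contravar; lra).
    pose proof (phi_t_atan_le (/ sqrt y) (/ sqrt x)
                  ltac:(split; [apply Rinv_0_lt_compat|]; lra)).
    lra. }
  intros Hy1 Hy2. destruct (Rle_lt_dec y1 y2); [apply Hconv; lra|].
  rewrite (Rplus_comm y1), (Rplus_comm (ln_t_atan y1)). apply Hconv. lra.
Qed.

(* At [y = / t ^ 2] the hypothesis makes [ln_t_atan y_s] the mean of [ln_t_atan y_p]
   and [ln_t_atan y_q]; convexity and monotonicity give [y_s <= (y_p + y_q) / 2]. *)
Lemma inv_sqr_mean_ge (tp tq ts : R) :
  0 < tp -> 0 < tq -> 0 < ts ->
  (tp * atan tp) * (tq * atan tq) = (ts * atan ts) ^ 2 ->
  2 / ts ^ 2 <= / tp ^ 2 + / tq ^ 2.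
Proof.
  intros Hp Hq Hs HK.
  pose proof (Rmult_lt_0_compat _ _ Hp (atan_pos tp Hp)).
  pose proof (Rmult_lt_0_compat _ _ Hq (atan_pos tq Hq)).
  pose proof (Rmult_lt_0_compat _ _ Hs (atan_pos ts Hs)).
  pose proof (Rinv_0_lt_compat _ (pow_lt tp 2 Hp)).
  pose proof (Rinv_0_lt_compat _ (pow_lt tq 2 Hq)).
  pose proof (Rinv_0_lt_compat _ (pow_lt ts 2 Hs)).
  assert (Hsum : ln_t_atan (/ tp ^ 2) + ln_t_atan (/ tq ^ 2) = 2 * ln_t_atan (/ ts ^ 2)).
  { rewrite !ln_t_atan_inv_sqr, <- ln_mult, HK by assumption.
    rewrite <- Rsqr_pow2. unfold Rsqr. rewrite ln_mult by assumption. ring. }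
  pose proof (ln_t_atan_midpoint_convex (/ tp ^ 2) (/ tq ^ 2) ltac:(assumption) ltac:(assumption)).
  destruct (Rle_lt_dec (/ ts ^ 2) ((/ tp ^ 2 + / tq ^ 2) / 2)) as [Hle|Hlt]; [unfold Rdiv; lra|].
  pose proof (ln_t_atan_decr ((/ tp ^ 2 + / tq ^ 2) / 2) (/ ts ^ 2) ltac:(lra)). lra.
Qed.

Lemma robin_inv_sqr_mean_ge (alpha p q s tp tq ts : R) :
  0 < alpha -> 0 < tp -> 0 < tq -> 0 < ts ->
  tp * atan tp = alpha * p / 2 -> tq * atan tq = alpha * q / 2 ->
  ts * atan ts = alpha * s / 2 -> p * q = s ^ 2 ->
  2 * (alpha / ts) ^ 2 <= (alpha / tp) ^ 2 + (alpha / tq) ^ 2.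
Proof.
  intros Halpha Htp Htq Hts Ep Eq Es Hpq.
  pose proof (inv_sqr_mean_ge tp tq ts Htp Htq Hts
                ltac:(rewrite Ep, Eq, Es; nra)) as Hmean.
  replace (2 * (alpha / ts) ^ 2) with (alpha ^ 2 * (2 / ts ^ 2)) by (field; lra).
  replace ((alpha / tp) ^ 2 + (alpha / tq) ^ 2) with (alpha ^ 2 * (/ tp ^ 2 + / tq ^ 2))
    by (field; lra).
  apply Rmult_le_compat_l; [apply pow2_ge_0|exact Hmean].
Qed.

Lemma piece_area_eq_square (A a n : R) :
  0 <= A -> 0 < a -> 0 < n -> sqrt A * a / n * (sqrt A / a) = sqrt (A / n) ^ 2.
Proof.
  intros HA Ha Hn. rewrite <- Rsqr_pow2, Rsqr_sqrt by (apply Rdiv_le_0_compat; lra).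
  rewrite <- (sqrt_sqrt A) at 3 by exact HA. field. lra.
Qed.

Theorem lemma7p1 (alpha A : R) (k : nat) (a : R) :
  0 < alpha -> 0 < A -> (2 <= k)%nat -> 1 <= a ->
  Rbar_le (robin_eig_square alpha (sqrt (A / INR k)) 1)
          (Rbar_plus (robin_eig_interval alpha (sqrt A * a) k)
                     (robin_eig_interval alpha (sqrt A / a) 1))
  /\ robin_eig_square alpha (sqrt (A / INR k)) 1 = robin_eig_squares alpha A k k.
Proof.
  intros Halpha HA Hk Ha.
  pose proof (lt_0_INR k ltac:(lia)) as Hk0. pose proof (sqrt_lt_R0 A HA).
  set (p := sqrt A * a / INR k). set (q := sqrt A / a). set (s := sqrt (A / INR k)).
  assert (Hp : 0 < p) by (apply Rdiv_lt_0_compat; nra).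
  assert (Hq : 0 < q) by (apply Rdiv_lt_0_compat; lra).
  assert (Hs : 0 < s) by (apply sqrt_lt_R0, Rdiv_lt_0_compat; lra).
  destruct (exists_mul_atan (alpha * p / 2)) as [tp [Htp Ep]]; [nra|].
  destruct (exists_mul_atan (alpha * q / 2)) as [tq [Htq Eq]]; [nra|].
  destruct (exists_mul_atan (alpha * s / 2)) as [ts [Hts Es]]; [nra|].
  pose proof (robin_inv_sqr_mean_ge alpha p q s tp tq ts Halpha Htp Htq Hts Ep Eq Es
                (piece_area_eq_square A a (INR k) ltac:(lra) ltac:(lra) Hk0)) as Hkey.
  assert (Hsq_up := robin_eig_square_le alpha s ts Halpha Hs Hts Es).
  assert (Hsq_low := robin_eig_square_ge_0 alpha s ltac:(lra) ltac:(lra)).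
  destruct (robin_eig_square alpha s 1) as [l| |] eqn:Hl; try contradiction.
  split.
  - assert (Hlong := robin_eig_interval_ge alpha p tp k Halpha Hp Htp Ep ltac:(lia)).
    assert (Hshort := robin_eig_interval_ge alpha q tq 1 Halpha Hq Htq Eq (le_n 1)).
    replace (INR k * p) with (sqrt A * a) in Hlong by (unfold p; field; lra).
    replace (INR 1 * q) with (sqrt A / a) in Hshort by (unfold q; simpl; ring).
    apply (Rbar_le_trans _ ((alpha / tp) ^ 2 + (alpha / tq) ^ 2)).
    + simpl in Hsq_up |- *. lra.
    + exact (Rbar_plus_le_compat _ _ _ _ Hlong Hshort).
  - apply Rbar_le_antisym.
    + exact (robin_eig_square_le_squares alpha A l k ltac:(lra) ltac:(lia) Hl).
    + rewrite <- Hl. apply robin_eig_squares_le_square. lia.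
Qed.
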